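(* Let $\mathcal{A}'\subsetneq\mathcal{A}$ be finite alphabets, $\Omega$ a prefix extension from $\mathcal{A}'$ to $\mathcal{A}$ given by words $\{\omega_{\varepsilon,b}\}_{\varepsilon\in\{0,1\},b\in\mathcal{A}'}$, and $\mathbf{p}=(p_0,p_1)$ an irreducible pair on $\mathcal{A}'$ with $a_\varepsilon=p_\varepsilon^{-1}(1)$. Then $\Omega(\mathbf{p})$ is irreducible if and only if there is no $k>0$ such that the first $k$ letters of $\omega_{0,a_0}$ and the first $k$ letters of $\omega_{1,a_1}$ form the same set.
   Context: A pair on an alphabet $\mathcal{B}$ with $m=\#\mathcal{B}$ is $(q_0,q_1)$ with $q_0,q_1:\mathcal{B}\to\{1,\dots,m\}$ bijections; row $\varepsilon$ is the word $q_\varepsilon^{-1}(1)\cdots q_\varepsilon^{-1}(m)$. It is irreducible if $q_0^{-1}\{1,\dots,k\}\ne q_1^{-1}\{1,\dots,k\}$ for all $1\le k<m$. A word is an ordered collection of distinct letters. A prefix extension from $\mathcal{A}'$ to $\mathcal{A}$ is a choice of words $\omega_{\varepsilon,b}$ ($\varepsilon\in\{0,1\}$, $b\in\mathcal{A}'$) such that: each $\omega_{\varepsilon,b}=u\,b$ with $u$ a possibly empty word in letters of $\mathcal{A}\setminus\mathcal{A}'$; for each $\varepsilon$, every letter of $\mathcal{A}$ appears in some $\omega_{\varepsilon,b}$; and for each $\varepsilon$ and $b\ne c$, $\omega_{\varepsilon,b}$ and $\omega_{\varepsilon,c}$ share no letter. For a pair $\mathbf{p}$ on $\mathcal{A}'$,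 $\Omega(\mathbf{p})$ is the pair on $\mathcal{A}$ whose row $\varepsilon$ is obtained from row $\varepsilon$ of $\mathbf{p}$ by replacing each letter $b$ by the word $\omega_{\varepsilon,b}$. *)

From mathcomp Require Import all_boot.
Set Implicit Arguments. Unset Strict Implicit. Unset Printing Implicit Defensive.

Section Pairs.
Variable T : finType.

(* A pair (q0,q1) on the alphabet B is represented by its two rows
   (row e = q_e^{-1}(1) ... q_e^{-1}(m)); each row is a word (distinct
   letters) whose set of letters is exactly B.  Row 0 is indexed by
   [false], row 1 by [true]. *)
Definition is_pair (B : {set T}) (r0 r1 : seq T) : Prop :=
  [/\ uniq r0, uniq r1, [set x in r0] = B & [set x in r1] = B].

Definition irreducible_pair (B : {set T}) (r0 r1 : seq T) : Prop :=
  forall k : nat, 1 <= k -> k < #|B| ->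
    [set x in take k r0] <> [set x in take k r1].

Definition prefix_extension (A' A : {set T}) (omega : bool -> T -> seq T)
  : Prop :=
  [/\ (forall (e : bool) (b : T), b \in A' ->
         exists u : seq T,
           [/\ omega e b = rcons u b, uniq u & {subset u <= A :\: A'}]),
      (forall (e : bool) (x : T), x \in A ->
         exists2 b, b \in A' & x \in omega e b)
    & (forall (e : bool) (b c : T), b \in A' -> c \in A' -> b != c ->
         [disjoint omega e b & omega e c])].

Definition Omega_row (omega : bool -> T -> seq T) (e : bool) (r : seq T)
  : seq T := flatten [seq omega e b | b <- r].

End Pairs.

From mathcomp Require Import all_boot.
From mathcomp Require Import zify.

Set Implicit Arguments.
Unset Strict Implicit.
Unset Printing Implicit Defensive.

(* Each word omega_{e,b} contains exactly one letter of A', its last letter b.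
   Hence a prefix of a row of Omega(p) meets A' in a prefix of the same row of
   p, and a common prefix set of the rows of Omega(p) yields common prefix
   sets of the rows of p of equal length j.  Irreducibility of p rules out
   0 < j < #|A'|, and j = #|A'| would force all of A into fewer than #|A|
   letters; so j = 0 and the common prefix lies inside the first words
   omega_{0,a0} and omega_{1,a1}.  Conversely a common prefix set of the first
   words is one of the rows of Omega(p); if it has #|A| letters, both first
   words exhaust A and dropping their last letters gives a shorter one. *)

Lemma card_set_take (T : finType) (r : seq T) (j : nat) :
  uniq r -> j <= size r -> #|[set x in take j r]| = j.
Proof.
by move=> r_uniq le_j; rewrite cardsE (card_uniqP _) ?take_uniq // size_takel.
Qed.

Lemma card_set_take_le (T : finType) (r : seq T) (k : nat) :
  #|[set x in take k r]| <= k.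
Proof.
by rewrite cardsE (leq_trans (card_size _)) // size_take_min geq_minl.
Qed.

Lemma Omega_row_cons (T : finType) (omega : bool -> T -> seq T) e b s :
  Omega_row omega e (b :: s) = omega e b ++ Omega_row omega e s.
Proof. by []. Qed.

Lemma take_Omega_row_head (T : finType) (omega : bool -> T -> seq T) e b s k :
  k <= size (omega e b) -> take k (Omega_row omega e (b :: s)) = take k (omega e b).
Proof. by move=> le_k; rewrite Omega_row_cons takel_cat. Qed.

Section PrefixExtension.

Variables (T : finType) (A' A : {set T}) (omega : bool -> T -> seq T).
Hypothesis omegaP : prefix_extension A' A omega.

Lemma omega_rcons e b : b \in A' ->
  exists u, [/\ omega e b = rcons u b, uniq u & {subset u <= A :\: A'}].
Proof. by case: omegaP => omega_rcons _ _; apply: omega_rcons. Qed.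

Lemma omega_setI e b x : b \in A' -> (x \in omega e b) && (x \in A') = (x == b).
Proof.
move=> bA'; have [u [-> _ uA]] := omega_rcons e bA'.
rewrite mem_rcons inE; case: eqP => [-> | _] /=; first by rewrite bA'.
by apply/negbTE/andP => -[/uA]; rewrite inE => /andP[/negP].
Qed.

Lemma omega_uniq e b : b \in A' -> uniq (omega e b).
Proof.
move=> bA'; have [u [-> u_uniq uA]] := omega_rcons e bA'.
by rewrite rcons_uniq u_uniq andbT; apply/negP => /uA; rewrite inE bA'.
Qed.

Lemma size_omega_le e b : A' \subset A -> b \in A' -> size (omega e b) <= #|A|.
Proof.
move=> sA'A bA'; rewrite -(card_uniqP (omega_uniq e bA')) -cardsE.
apply/subset_leq_card/subsetP => x; rewrite inE.
have [u [-> _ uA]] := omega_rcons e bA'.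
rewrite mem_rcons inE => /orP[/eqP -> | /uA]; first exact: (subsetP sA'A).
by rewrite inE => /andP[].
Qed.

Lemma set_take_omega_last e b : b \in A' ->
  [set x in take (size (omega e b)).-1 (omega e b)] = [set x in omega e b] :\: A'.
Proof.
move=> bA'; have [u [-> _ uA]] := omega_rcons e bA'.
rewrite size_rcons -cats1 take_size_cat //; apply/setP => x.
rewrite !inE mem_cat inE; case xu: (x \in u) => /=.
  by have := uA x xu; rewrite inE andbT => /andP[->].
by case: eqP => [->|]; rewrite ?bA' ?andbF.
Qed.

Lemma Omega_row_cover e r : {subset A' <= r} ->
  A \subset [set x in Omega_row omega e r].
Proof.
case: omegaP => _ omega_cover _ A'r; apply/subsetP => x /(omega_cover e) [b bA' xb].
by rewrite inE; apply/flatten_mapP; exists b; first exact: A'r.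
Qed.

Lemma Omega_row_take_setI e r k : {subset r <= A'} ->
  exists2 j, j <= size r &
    [/\ [set x in take k (Omega_row omega e r)] :&: A' = [set x in take j r],
        j = size r -> size (Omega_row omega e r) <= k
      & forall b s, r = b :: s -> j = 0 -> k < size (omega e b)].
Proof.
elim: r k => [|b s IH] k rA'.
  by exists 0 => //; split => //; apply/setP => x; rewrite !inE.
have bA' : b \in A' by apply: rA'; rewrite mem_head.
have sA' : {subset s <= A'} by move=> x xs; apply: rA'; rewrite inE xs orbT.
rewrite Omega_row_cons take_cat; case: ltnP => [lt_k | le_k].
  exists 0 => //; split=> // [|_ _ [<- _] //]; apply/setP => x; rewrite !inE.
  apply/negbTE/andP => -[x_take xA']; have [u [omega_eb _ uA]] := omega_rcons e bA'.
  move: lt_k x_take; rewrite omega_eb size_rcons ltnS -cats1 => le_k.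
  by rewrite takel_cat // => /mem_take /uA; rewrite inE xA'.
have [j le_j [take_setI full _]] := IH (k - size (omega e b)) sA'.
exists j.+1 => //; split=> // [|[/full]]; last by rewrite size_cat; lia.
apply/setP => x; move/setP: take_setI => /(_ x).
by rewrite !inE mem_cat andb_orl omega_setI // => ->.
Qed.

Lemma not_irreducible_Omega_of_common_head a0 a1 s0 s1 k :
  A' \proper A -> a0 \in A' -> a1 \in A' ->
  0 < k -> k <= size (omega false a0) -> k <= size (omega true a1) ->
  [set x in take k (omega false a0)] = [set x in take k (omega true a1)] ->
  ~ irreducible_pair A (Omega_row omega false (a0 :: s0))
                       (Omega_row omega true (a1 :: s1)).
Proof.
move=> ltA'A a0A' a1A' k_gt0 le_k0 le_k1 eq_take irrO.
have [lt_kA | le_Ak] := ltnP k #|A|.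
  by apply: (irrO k k_gt0 lt_kA); rewrite !take_Omega_row_head.
have sA'A := proper_sub ltA'A.
have le_kA : k <= #|A| by rewrite (leq_trans le_k0) ?size_omega_le.
have size0 : size (omega false a0) = k.
  by apply/eqP; rewrite eqn_leq (leq_trans (size_omega_le _ sA'A a0A')).
have size1 : size (omega true a1) = k.
  by apply/eqP; rewrite eqn_leq (leq_trans (size_omega_le _ sA'A a1A')).
have two_le_A : 1 < #|A|.
  by apply: leq_ltn_trans (proper_card ltA'A); rewrite card_gt0; apply/set0Pn; exists a0.
(* Both first words have #|A| letters, and removing A' from their common set
   removes exactly their last letters. *)
apply: (irrO k.-1); [lia | lia |].
rewrite !take_Omega_row_head ?size0 ?size1 ?leq_pred //.
rewrite -{1}size0 -size1 !set_take_omega_last //.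
by rewrite -(take_size (omega false a0)) -(take_size (omega true a1)) size0 size1 eq_take.
Qed.

Lemma common_head_of_not_irreducible_Omega a0 a1 s0 s1 k :
  A' \proper A -> is_pair A' (a0 :: s0) (a1 :: s1) ->
  irreducible_pair A' (a0 :: s0) (a1 :: s1) ->
  0 < k -> k < #|A| ->
  [set x in take k (Omega_row omega false (a0 :: s0))] =
    [set x in take k (Omega_row omega true (a1 :: s1))] ->
  [/\ 0 < k, k <= size (omega false a0), k <= size (omega true a1)
    & [set x in take k (omega false a0)] = [set x in take k (omega true a1)]].
Proof.
move=> ltA'A [uniq0 uniq1 set0 set1] irr k_gt0 lt_kA eq_take.
have sub0 : {subset a0 :: s0 <= A'} by move=> x x0; rewrite -set0 inE.
have sub1 : {subset a1 :: s1 <= A'} by move=> x x1; rewrite -set1 inE.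
have [j0 le_j0 [setI0 full0 head0]] := Omega_row_take_setI false k sub0.
have [j1 le_j1 [setI1 _ head1]] := Omega_row_take_setI true k sub1.
have eq_take_j : [set x in take j0 (a0 :: s0)] = [set x in take j1 (a1 :: s1)].
  by rewrite -setI0 -setI1 eq_take.
have ej : j0 = j1 by rewrite -(card_set_take uniq0 le_j0) eq_take_j card_set_take.
subst j1; have [j0_eq0 | j0_gt0] := posnP j0.
  have lt_k0 := head0 _ _ erefl j0_eq0; have lt_k1 := head1 _ _ erefl j0_eq0.
  split=> //; [exact: ltnW | exact: ltnW |].
  by rewrite -(take_Omega_row_head s0 (ltnW lt_k0)) -(take_Omega_row_head s1 (ltnW lt_k1)).
have card0 : #|A'| = size (a0 :: s0) by rewrite -set0 cardsE (card_uniqP uniq0).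
have [lt_j0 | le_j0'] := ltnP j0 #|A'|; first by case: (irr j0 j0_gt0 lt_j0).
(* Otherwise the whole first row of Omega(p) fits in k < #|A| letters. *)
have full : size (Omega_row omega false (a0 :: s0)) <= k.
  by apply/full0/eqP; rewrite eqn_leq le_j0 -card0.
have A'sub0 : {subset A' <= a0 :: s0} by move=> x; rewrite -set0 inE.
have := Omega_row_cover false A'sub0.
move: eq_take; rewrite take_oversize // => ->.
by move/subset_leq_card/leq_trans/(_ (card_set_take_le _ _)); rewrite leqNgt lt_kA.
Qed.

End PrefixExtension.

Theorem lemma2p24 (T : finType) (A' A : {set T})
  (omega : bool -> T -> seq T) (r0 r1 : seq T) (a0 a1 : T) :
  A' \proper A ->
  prefix_extension A' A omega ->
  is_pair A' r0 r1 ->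
  irreducible_pair A' r0 r1 ->
  ohead r0 = Some a0 -> ohead r1 = Some a1 ->
  (irreducible_pair A (Omega_row omega false r0) (Omega_row omega true r1) <->
   ~ (exists k : nat,
        [/\ 0 < k, k <= size (omega false a0), k <= size (omega true a1)
          & [set x in take k (omega false a0)] =
            [set x in take k (omega true a1)]])).
Proof.
move=> ltA'A omegaP pairP irr head0 head1.
have [s0 Er0] : exists s0, r0 = a0 :: s0 by case: r0 head0 {pairP irr} => // b s [->]; exists s.
have [s1 Er1] : exists s1, r1 = a1 :: s1 by case: r1 head1 {pairP irr} => // b s [->]; exists s.
subst r0 r1; have [_ _ set0 set1] := pairP.
have a0A' : a0 \in A' by rewrite -set0 inE mem_head.
have a1A' : a1 \in A' by rewrite -set1 inE mem_head.
split=> [irrO [k [k_gt0 le_k0 le_k1 eq_take]] | no_common k k_gt0 lt_kA eq_take].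
  exact: (not_irreducible_Omega_of_common_head omegaP ltA'A a0A' a1A' k_gt0 le_k0 le_k1 eq_take irrO).
apply: no_common; exists k.
exact: (common_head_of_not_irreducible_Omega omegaP ltA'A pairP irr k_gt0 lt_kA eq_take).
Qed.
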